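(* Consider M-FACTORING, and let $n\geqslant 2$, where each option is a non-trivial disjunctive sum of a factoring of $n$. Then $\mathcal{SG}(n)=\Omega(n)-1$. If no two distinct components may contain the same prime number, then $\mathcal{SG}(n)=\omega(n)-1$.
   Context: M-FACTORING is the impartial normal-play heap game where a move from a heap $n$ replaces it by the disjunctive sum $a_1+\cdots+a_k$ of a factorization $n=a_1a_2\cdots a_k$ with $k\ge2$ and $1<a_1\le\cdots\le a_k$. $\mathcal{SG}$ denotes the Sprague-Grundy value (mex rule, nim-sum). $\Omega(n)$ counts prime factors with multiplicity, $\omega(n)$ counts distinct prime factors. *)

From mathcomp Require Import all_boot.
Set Implicit Arguments. Unset Strict Implicit. Unset Printing Implicit Defensive.

Definition is_factorization (n : nat) (s : seq nat) : bool :=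
  [&& 2 <= size s, all (fun a => 1 < a) s, sorted leq s & \prod_(a <- s) a == n].

Definition is_coprime_factorization (n : nat) (s : seq nat) : bool :=
  is_factorization n s && pairwise coprime s.

(* All lists of length <= k with entries from D (a finite universe containing
   every factorization of n when k = n and D = divisors n). *)
Fixpoint seqs_upto (k : nat) (D : seq nat) : seq (seq nat) :=
  if k is k'.+1 then [::] :: [seq d :: s | d <- D, s <- seqs_upto k' D]
  else [:: [::]].

Definition options (P : nat -> seq nat -> bool) (n : nat) : seq (seq nat) :=
  [seq s <- undup (seqs_upto n (divisors n)) | P n s].

Definition nimsum (s : seq nat) : nat := foldr Nat.lxor 0 s.

Definition mex (s : seq nat) : nat :=
  find (fun m => m \notin s) (iota 0 (size s).+1).

(* Sprague-Grundy value by recursion with fuel; every component of an option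
   from n is < n, so fuel n is enough. *)
Fixpoint sg_fuel (P : nat -> seq nat -> bool) (fuel n : nat) : nat :=
  if fuel is f.+1 then mex [seq nimsum (map (sg_fuel P f) s) | s <- options P n]
  else 0.

Definition SG (P : nat -> seq nat -> bool) (n : nat) : nat := sg_fuel P n n.

Definition bigOmega (n : nat) : nat := \sum_(p <- primes n) logn p n.
Definition smallomega (n : nat) : nat := size (primes n).

(* Both Omega and omega are additive along legal moves n = a_1 ... a_k (for
   omega because the a_i are pairwise coprime) and at least 1 on every a_i > 1.
   So the nim-sum of the values Omega(a_i) - 1 of a move is at most their
   ordinary sum Omega(n) - k <= Omega(n) - 2, and no move reaches Omega(n) - 1.
   Conversely, write n as a product of Omega(n) primes (resp. omega(n) coprime
   prime powers) and merge the first j + 1 of them: the merged component has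
   value j and every other one has value 0, so every j < Omega(n) - 1 is
   reached. *)

From Stdlib Require Import PeanoNat.
From HB Require Import structures.
From mathcomp Require Import all_boot zify.

Set Implicit Arguments.
Unset Strict Implicit.
Unset Printing Implicit Defensive.

Lemma lxor_leq_add a b : Nat.lxor a b <= a + b.
Proof.
have -> : Nat.lxor a b = Nat.ldiff a b + Nat.ldiff b a.
  rewrite -plusE Nat.add_nocarry_lxor; apply: Nat.bits_inj => i;
  rewrite ?Nat.lxor_spec ?Nat.land_spec !Nat.ldiff_spec ?Nat.bits_0;
  by case: (Nat.testbit a i); case: (Nat.testbit b i).
by apply: leq_add; apply/leP; apply: Nat.ldiff_le_l.
Qed.

HB.instance Definition _ := Monoid.isComLaw.Build nat 0 Nat.lxor
  (fun a b c => esym (Nat.lxor_assoc a b c)) Nat.lxor_comm Nat.lxor_0_l.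

Lemma perm_nimsum s t : perm_eq s t -> nimsum s = nimsum t.
Proof. by move=> pst; rewrite /nimsum !foldrE; apply: perm_big. Qed.

Lemma nimsum_leq_sumn s : nimsum s <= sumn s.
Proof.
elim: s => [//|x s IHs] /=.
by apply: leq_trans (lxor_leq_add _ _) _; rewrite leq_add2l.
Qed.

Lemma nimsum_eq0 s : all (pred1 0) s -> nimsum s = 0.
Proof. by elim: s => [//|x s IHs] /= /andP[/eqP -> /IHs ->]. Qed.

Lemma mex_eq s m : m \notin s -> (forall j, j < m -> j \in s) -> mex s = m.
Proof.
move=> s'm below_m.
have le_m_s : m <= size s.
  rewrite -(size_iota 0 m); apply: uniq_leq_size (iota_uniq 0 m) _ => j.
  by rewrite mem_iota add0n; apply: below_m.
rewrite /mex -(subnKC (leqW le_m_s)) iotaD find_cat size_iota add0n.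
have -> : has (fun j => j \notin s) (iota 0 m) = false.
  by apply/hasPn => j; rewrite mem_iota add0n negbK; apply: below_m.
by rewrite subSn //= s'm addn0.
Qed.

Lemma exp2_size_leq_prod s : all (fun a => 1 < a) s -> 2 ^ size s <= \prod_(a <- s) a.
Proof.
elim: s => [|a s IHs] /=; first by rewrite big_nil.
by case/andP=> a_gt1 s_gt1; rewrite big_cons expnS leq_mul ?IHs.
Qed.

Lemma factorization_size_lt n s : is_factorization n s -> size s < n.
Proof.
case/and4P=> _ s_gt1 _ /eqP <-.
exact: leq_trans (@ltn_expl 2 (size s) (ltnSn 1)) (exp2_size_leq_prod s_gt1).
Qed.

Lemma factorization_dvd n s a : is_factorization n s -> a \in s -> a %| n.
Proof. by case/and4P=> _ _ _ /eqP <- s_a; rewrite (big_rem a s_a) dvdn_mulr. Qed.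

Lemma factorization_mem_lt n s a : is_factorization n s -> a \in s -> 1 < a < n.
Proof.
case/and4P=> size_s s_gt1 _ /eqP <- s_a; have a_gt1 := allP s_gt1 a s_a.
have rem_gt1 : all (fun x => 1 < x) (rem a s).
  by apply/allP=> x /mem_rem /(allP s_gt1).
have rem_prod_gt1 : 1 < \prod_(x <- rem a s) x.
  apply: leq_trans (exp2_size_leq_prod rem_gt1); rewrite size_rem //.
  by case: (size s) size_s => [|[|k]] // _; rewrite expnS leq_pmulr ?expn_gt0.
by rewrite a_gt1 (big_rem a s_a) ltn_Pmulr // ltnW.
Qed.

Lemma mem_seqs_upto k D s : size s <= k -> all (mem D) s -> s \in seqs_upto k D.
Proof.
elim: k s => [|k IHk] [|d s] //= /[!ltnS] size_s /andP[D_d D_s].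
rewrite inE; apply/orP; right.
by apply: (allpairs_f (fun d s => d :: s)) => //; apply: IHk.
Qed.

Lemma mem_options (P : nat -> seq nat -> bool) n s :
  (forall n s, P n s -> is_factorization n s) -> (s \in options P n) = P n s.
Proof.
move=> P_fact; rewrite /options mem_filter mem_undup.
case P_ns: (P n s) => //=; have fact_s := P_fact _ _ P_ns.
have n_gt0 : 0 < n by apply: leq_ltn_trans (factorization_size_lt fact_s).
apply: mem_seqs_upto; first exact: ltnW (factorization_size_lt fact_s).
by apply/allP => a s_a; rewrite /= -dvdn_divisors // (factorization_dvd fact_s).
Qed.

Section GrundyValue.

Variables (P : nat -> seq nat -> bool) (g : nat -> nat).
Hypothesis P_factorization : forall n s, P n s -> is_factorization n s.
Hypothesis option_nimsum_neq : forall n s, P n s -> nimsum (map g s) != g n.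
Hypothesis option_nimsum_below : forall n j, 0 < n -> j < g n ->
  exists2 s, P n s & nimsum (map g s) = j.

Lemma sg_fuel_eq f m : 0 < m <= f -> sg_fuel P f m = g m.
Proof.
elim: f m => [|f IHf] m /andP[m_gt0 le_m_f]; first by case: m m_gt0 le_m_f.
have sg_option s : s \in options P m ->
    nimsum (map (sg_fuel P f) s) = nimsum (map g s).
  rewrite mem_options // => /P_factorization fact_s; congr nimsum.
  apply/eq_in_map => a /(factorization_mem_lt fact_s) /andP[a_gt1 a_lt_m].
  by apply: IHf; rewrite ltnW //= -ltnS (leq_trans a_lt_m).
rewrite /=; have /eq_in_map -> := sg_option; apply: mex_eq.
  apply/mapP=> -[s]; rewrite mem_options // => P_ms /eqP.
  by rewrite eq_sym (negPf (option_nimsum_neq P_ms)).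
move=> j /(option_nimsum_below m_gt0) [s P_ms <-].
by apply: map_f; rewrite mem_options.
Qed.

Lemma SG_eq n : 0 < n -> SG P n = g n.
Proof. by move=> n_gt0; apply: sg_fuel_eq; rewrite n_gt0 /=. Qed.

End GrundyValue.

Lemma sumn_map_subn1 (g : nat -> nat) (s : seq nat) :
  {in s, forall x, 0 < g x} -> sumn [seq g x - 1 | x <- s] + size s = sumn (map g s).
Proof.
move=> g_gt0; rewrite !sumnE !big_map -sum1_size -big_split.
by apply: eq_big_seq => x /g_gt0; apply: subnK.
Qed.

Section AdditiveGrundyValue.

Variables (P : nat -> seq nat -> bool) (f : nat -> nat).
Hypothesis P_factorization : forall n s, P n s -> is_factorization n s.
Hypothesis f_gt0 : forall a, 1 < a -> 0 < f a.
Hypothesis f_additive : forall n s, P n s -> f n = sumn (map f s).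
Hypothesis atom_decomposition : forall n, 0 < n -> exists L : seq nat,
  [/\ \prod_(x <- L) x = n, size L = f n,
      all (fun x => (1 < x) && (f x == 1)) L &
      forall k s, perm_eq s (\prod_(x <- take k L) x :: drop k L) ->
        is_factorization n s -> P n s].

Let g x := f x - 1.

Lemma option_nimsum_lt n s : P n s -> nimsum (map g s) < g n.
Proof.
move=> P_ns; have /and4P[size_s s_gt1 _ _] := P_factorization P_ns.
have := sumn_map_subn1 (fun x s_x => f_gt0 (allP s_gt1 x s_x)).
have := nimsum_leq_sumn (map g s).
by rewrite /g -(f_additive P_ns); lia.
Qed.

Lemma option_nimsum_realized n j : 0 < n -> j < g n ->
  exists2 s, P n s & nimsum (map g s) = j.
Proof.
move=> n_gt0 lt_j_gn; have [L [prod_L size_L atoms_L merge_admissible]] :=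
  atom_decomposition n_gt0.
have atom x : x \in L -> 1 < x /\ f x = 1.
  by move/(allP atoms_L) => /andP[-> /eqP].
set a := \prod_(x <- take j.+1 L) x; set r := drop j.+1 L.
have lt_j1_L : j.+1 < size L by rewrite /g in lt_j_gn; lia.
have a_gt1 : 1 < a.
  have take_gt1 : all (fun x => 1 < x) (take j.+1 L).
    by apply/allP=> x /mem_take /atom [].
  apply: leq_trans (exp2_size_leq_prod take_gt1).
  by rewrite size_take lt_j1_L expnS leq_pmulr ?expn_gt0.
have sumn_r : sumn (map f r) = size r.
  rewrite sumnE big_map -sum1_size; apply: eq_big_seq => x.
  by move/mem_drop/atom=> [].
have perm_sort_ar : perm_eq (sort leq (a :: r)) (a :: r) by rewrite perm_sort.
have fact_s : is_factorization n (sort leq (a :: r)).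
  apply/and4P; split.
  - by rewrite size_sort /= size_drop; lia.
  - by rewrite all_sort /= a_gt1; apply/allP=> x /mem_drop /atom [].
  - apply: sort_sorted; exact: leq_total.
  - by rewrite (perm_big _ perm_sort_ar) big_cons -big_cat cat_take_drop prod_L.
have P_s := merge_admissible _ _ perm_sort_ar fact_s.
have f_a : f a = j.+1.
  have := f_additive P_s; rewrite (perm_sumn (perm_map f perm_sort_ar)) /= sumn_r.
  by rewrite size_drop size_L; lia.
exists (sort leq (a :: r)) => //.
rewrite (perm_nimsum (perm_map g perm_sort_ar)) /= nimsum_eq0.
  by rewrite /g f_a subn1 Nat.lxor_0_r.
by rewrite all_map; apply/allP=> x /mem_drop /atom [_]; rewrite /= /g => ->.
Qed.

Lemma SG_additive n : 0 < n -> SG P n = f n - 1.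
Proof.
apply: (@SG_eq P g) => // [m s P_ms|]; last exact: option_nimsum_realized.
by rewrite neq_ltn option_nimsum_lt.
Qed.

End AdditiveGrundyValue.

Lemma bigOmega_sum_supset n r : uniq r -> {subset primes n <= r} ->
  bigOmega n = \sum_(p <- r) logn p n.
Proof.
move=> r_uniq primes_sub_r.
rewrite (bigID (mem (primes n))) /= [X in _ + X]big1 ?addn0; last first.
  by move=> p /negbTE p'n; apply/eqP; rewrite -leqn0 leqNgt logn_gt0 p'n.
rewrite -big_filter /bigOmega; apply: perm_big; apply: uniq_perm.
- exact: primes_uniq.
- exact: filter_uniq.
by move=> p; rewrite mem_filter andb_idr //; apply: primes_sub_r.
Qed.

Lemma bigOmegaM a b : 0 < a -> 0 < b -> bigOmega (a * b) = bigOmega a + bigOmega b.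
Proof.
move=> a_gt0 b_gt0.
rewrite !(@bigOmega_sum_supset _ (primes (a * b))) ?primes_uniq // => [|p|p].
- by rewrite -big_split; apply: eq_bigr => p _; apply: lognM.
- by rewrite primesM // => ->; rewrite orbT.
- by rewrite primesM // => ->.
Qed.

Lemma bigOmega_prime p : prime p -> bigOmega p = 1.
Proof. by move=> p_pr; rewrite /bigOmega primes_prime // big_seq1 logn_prime ?eqxx. Qed.

Lemma bigOmega_gt0 a : 1 < a -> 0 < bigOmega a.
Proof.
move=> a_gt1; have p_a : pdiv a \in primes a.
  by rewrite mem_primes pdiv_prime // pdiv_dvd (ltnW a_gt1).
by rewrite /bigOmega (big_rem _ p_a) addn_gt0 logn_gt0 p_a.
Qed.

Lemma bigOmega_prod s : all (fun a => 0 < a) s ->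
  bigOmega (\prod_(a <- s) a) = sumn (map bigOmega s).
Proof.
elim: s => [|a s IHs] /=; first by rewrite big_nil /bigOmega big_nil.
case/andP=> a_gt0 s_gt0; rewrite big_cons bigOmegaM ?IHs //.
by rewrite big_seq_cond prodn_cond_gt0 // => x /andP[/(allP s_gt0)].
Qed.

Definition prime_factors n := flatten [seq nseq (logn p n) p | p <- primes n].

Lemma prod_prime_factors n : 0 < n -> \prod_(p <- prime_factors n) p = n.
Proof.
move=> n_gt0; rewrite big_flatten big_map [RHS](prod_prime_decomp n_gt0).
rewrite prime_decompE big_map; apply: eq_bigr => p _.
by rewrite big_nseq; apply: iter_muln_1.
Qed.

Lemma size_prime_factors n : size (prime_factors n) = bigOmega n.
Proof.
rewrite size_flatten /shape -map_comp sumnE big_map.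
by under eq_bigr do rewrite /= size_nseq.
Qed.

Lemma prime_factors_prime n : all prime (prime_factors n).
Proof.
apply/allP=> p /flattenP[_ /mapP[q q_n ->]]; rewrite mem_nseq => /andP[_ /eqP ->].
by move: q_n; rewrite mem_primes => /andP[].
Qed.

Lemma SG_factorization n : 0 < n -> SG is_factorization n = bigOmega n - 1.
Proof.
apply: SG_additive => // [a|m s|m m_gt0].
- exact: bigOmega_gt0.
- case/and4P=> _ s_gt1 _ /eqP <-; apply: bigOmega_prod.
  by apply: sub_all s_gt1 => a; apply: ltnW.
exists (prime_factors m); split=> //.
- exact: prod_prime_factors.
- exact: size_prime_factors.
apply/allP=> p /(allP (prime_factors_prime m)) p_pr.
by rewrite prime_gt1 // bigOmega_prime.
Qed.

Lemma coprime_prodl (s : seq nat) m :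
  {in s, forall a, coprime a m} -> coprime (\prod_(a <- s) a) m.
Proof.
move=> s_m; rewrite big_seq; elim/big_ind: _ => [|a b a_m b_m|a /s_m] //.
  exact: coprime1n.
by rewrite coprimeMl a_m.
Qed.

Lemma perm_pairwise (T : eqType) (r : rel T) (s t : seq T) :
  symmetric r -> perm_eq s t -> pairwise r s = pairwise r t.
Proof.
move=> r_sym; elim: s t => [|x s IHs] t; first by rewrite perm_sym => /perm_nilP ->.
move=> perm_xs_t; have t_x : x \in t by rewrite -(perm_mem perm_xs_t) mem_head.
case/splitPr: t_x perm_xs_t => t1 t2 perm_xs_t.
have perm_s : perm_eq s (t1 ++ t2).
  by rewrite -(perm_cons x) (perm_trans perm_xs_t) // -cat1s perm_catCA.
rewrite pairwise_cons (perm_all _ perm_s) (IHs _ perm_s).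
rewrite !pairwise_cat pairwise_cons allrel_consr all_cat.
rewrite (eq_all (a2 := r x) (fun y => r_sym y x)).
by case: (all (r x) t1); case: (all (r x) t2); case: (allrel r t1 t2);
  case: (pairwise r t1).
Qed.

Lemma pairwise_coprime_merge_prefix k (L : seq nat) : pairwise coprime L ->
  pairwise coprime (\prod_(a <- take k L) a :: drop k L).
Proof.
rewrite -{1}(cat_take_drop k L) pairwise_cat pairwise_cons => /and3P[take_drop _ ->].
rewrite andbT; apply/allP=> y drop_y; apply: coprime_prodl => x take_x.
by move/allrelP: take_drop; apply.
Qed.

Lemma smallomegaM a b : 0 < a -> 0 < b -> coprime a b ->
  smallomega (a * b) = smallomega a + smallomega b.
Proof.
move=> a_gt0 b_gt0 co_ab; rewrite /smallomega -size_cat; apply: perm_size.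
apply: uniq_perm => [||p]; rewrite ?primes_uniq ?primesM ?mem_cat //.
rewrite cat_uniq !primes_uniq andbT /=; apply/hasPn=> p p_b; apply/negP=> p_a.
move: p_a p_b; rewrite !mem_primes => /and3P[p_pr _ p_dv_a] /and3P[_ _ p_dv_b].
have : p %| gcdn a b by rewrite dvdn_gcd p_dv_a p_dv_b.
by rewrite (eqP co_ab) dvdn1 => /eqP p_eq1; rewrite p_eq1 in p_pr.
Qed.

Lemma smallomega_prod s : all (fun a => 0 < a) s -> pairwise coprime s ->
  smallomega (\prod_(a <- s) a) = sumn (map smallomega s).
Proof.
elim: s => [|a s IHs] /=; first by rewrite big_nil.
case/andP=> a_gt0 s_gt0 /andP[co_a_s co_s]; rewrite big_cons smallomegaM ?IHs //.
  by rewrite big_seq_cond prodn_cond_gt0 // => x /andP[/(allP s_gt0)].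
by rewrite coprime_sym coprime_prodl // => x /(allP co_a_s); rewrite coprime_sym.
Qed.

Lemma smallomega_gt0 a : 1 < a -> 0 < smallomega a.
Proof. by rewrite /smallomega lt0n size_eq0 primes_eq0 -leqNgt. Qed.

Definition prime_powers n := [seq p ^ logn p n | p <- primes n].

Lemma prod_prime_powers n : 0 < n -> \prod_(q <- prime_powers n) q = n.
Proof.
by move=> n_gt0; rewrite big_map [RHS](prod_prime_decomp n_gt0) prime_decompE big_map.
Qed.

Lemma size_prime_powers n : size (prime_powers n) = smallomega n.
Proof. exact: size_map. Qed.

Lemma prime_powers_atoms n :
  all (fun q => (1 < q) && (smallomega q == 1)) (prime_powers n).
Proof.
apply/allP=> _ /mapP[p p_n ->]; have logn_gt0 : 0 < logn p n by rewrite logn_gt0.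
move: p_n; rewrite mem_primes => /and3P[p_pr _ _].
rewrite -(exp1n (logn p n)) ltn_exp2r ?prime_gt1 //=.
by rewrite /smallomega exp1n primesX ?primes_prime.
Qed.

Lemma pairwise_coprime_prime_powers n : pairwise coprime (prime_powers n).
Proof.
rewrite pairwise_map; have := sorted_primes n.
rewrite sorted_pairwise; last exact: ltn_trans.
apply: sub_in_pairwise (mem (primes n)) _ _ _ _ _ => [p q p_n q_n /= lt_pq|].
  rewrite coprime_pexpl ?coprime_pexpr ?logn_gt0 //.
  move: p_n q_n; rewrite !mem_primes => /andP[p_pr _] /andP[q_pr _].
  by rewrite prime_coprime // dvdn_prime2 // ltn_eqF.
exact/allP.
Qed.

Lemma SG_coprime_factorization n :
  0 < n -> SG is_coprime_factorization n = smallomega n - 1.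
Proof.
apply: SG_additive => [m s /andP[]//|a|m s|m m_gt0].
- exact: smallomega_gt0.
- case/andP=> /and4P[_ s_gt1 _ /eqP <-] co_s; apply: smallomega_prod => //.
  by apply: sub_all s_gt1 => a; apply: ltnW.
exists (prime_powers m); split.
- exact: prod_prime_powers.
- exact: size_prime_powers.
- exact: prime_powers_atoms.
move=> k s perm_s fact_s; rewrite /is_coprime_factorization fact_s.
rewrite (perm_pairwise coprime_sym perm_s).
exact: pairwise_coprime_merge_prefix (pairwise_coprime_prime_powers m).
Qed.

Theorem mainTheorem13 (n : nat) (hn : 2 <= n) :
  SG is_factorization n = bigOmega n - 1 /\
  SG is_coprime_factorization n = smallomega n - 1.
Proof.
have n_gt0 : 0 < n by apply: ltnW.
by rewrite SG_factorization ?SG_coprime_factorization.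
Qed.
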